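(* Let $\alpha$ be an automorphism of a group $C$ with $\alpha^2=1$. If $Z^1_\alpha(C)$ is 2-divisible, then $H^1_\alpha(C)=\{1\}$. If $C$ is strongly 2-divisible, then $Z^1_\alpha(C)$ is also strongly 2-divisible, and consequently $H^1_\alpha(C)=\{1\}$.
   Context: A subset $S$ of a group is 2-divisible if every $s\in S$ equals $t^2$ for some $t\in S$; a group $C$ is strongly 2-divisible if every element has a unique square root in $C$. $Z^1_\alpha(C)=\{z\in C:\alpha(z)=z^{-1}\}$ and $H^1_\alpha(C)$ is the set of $C$-orbits in $Z^1_\alpha(C)$ under $x\cdot z=xz\alpha(x)^{-1}$; $H^1_\alpha(C)=\{1\}$ means $Z^1_\alpha(C)=\{y\alpha(y)^{-1}:y\in C\}$. *)

Set Implicit Arguments.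

Record is_group (C : Type) (mul : C -> C -> C) (one : C) (inv : C -> C) : Prop := {
  grp_assoc : forall x y z, mul x (mul y z) = mul (mul x y) z;
  grp_mul1l : forall x, mul one x = x;
  grp_mul1r : forall x, mul x one = x;
  grp_mulVl : forall x, mul (inv x) x = one;
  grp_mulVr : forall x, mul x (inv x) = one
}.

Definition is_automorphism (C : Type) (mul : C -> C -> C) (alpha : C -> C) : Prop :=
  (forall x y, alpha (mul x y) = mul (alpha x) (alpha y)) /\
  (forall x y, alpha x = alpha y -> x = y) /\
  (forall y, exists x, alpha x = y).

Definition two_divisible (C : Type) (mul : C -> C -> C) (S : C -> Prop) : Prop :=
  forall s, S s -> exists t, S t /\ s = mul t t.

Definition strongly_two_divisible_set (C : Type) (mul : C -> C -> C) (S : C -> Prop) : Prop :=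
  forall s, S s -> exists! t, S t /\ mul t t = s.

Definition strongly_two_divisible (C : Type) (mul : C -> C -> C) : Prop :=
  forall c, exists! t, mul t t = c.

Definition Z1 (C : Type) (inv : C -> C) (alpha : C -> C) (z : C) : Prop :=
  alpha z = inv z.

Definition H1_trivial (C : Type) (mul : C -> C -> C) (inv : C -> C) (alpha : C -> C) : Prop :=
  forall z, Z1 inv alpha z -> exists y, z = mul y (inv (alpha y)).

(* If z = t t with alpha t = t^-1, then z = t alpha(t)^-1 is a coboundary.
   When square roots in C are unique, the square root t of a cocycle z is
   itself a cocycle: alpha(t)^-1 is also a square root of alpha(z)^-1 = z. *)

Set Implicit Arguments.

Section Group.
Variables (C : Type) (mul : C -> C -> C) (one : C) (inv : C -> C).
Hypothesis HG : is_group mul one inv.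

Lemma inv_uniq a b : mul a b = one -> a = inv b.
Proof.
  intro Hab.
  rewrite <- (grp_mul1r HG a), <- (grp_mulVr HG b), (grp_assoc HG), Hab.
  apply (grp_mul1l HG).
Qed.

Lemma invK a : inv (inv a) = a.
Proof. symmetry; apply inv_uniq, (grp_mulVr HG). Qed.

Lemma invM a b : inv (mul a b) = mul (inv b) (inv a).
Proof.
  symmetry; apply inv_uniq.
  rewrite <- (grp_assoc HG), (grp_assoc HG (inv a)), (grp_mulVl HG), (grp_mul1l HG).
  apply (grp_mulVl HG).
Qed.

Lemma strongly_two_divisible_set_two_divisible (S : C -> Prop) :
  strongly_two_divisible_set mul S -> two_divisible mul S.
Proof.
  intros HS s Hs.
  destruct (HS s Hs) as [t [[St Ht] _]].
  exists t; split; [exact St | symmetry; exact Ht].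
Qed.

Variable alpha : C -> C.

Lemma two_divisible_Z1_H1_trivial :
  two_divisible mul (Z1 inv alpha) -> H1_trivial mul inv alpha.
Proof.
  intros Hdiv z Hz.
  destruct (Hdiv z Hz) as [t [Ht ->]].
  exists t; unfold Z1 in Ht; rewrite Ht, invK; reflexivity.
Qed.

Hypothesis alphaM : forall x y, alpha (mul x y) = mul (alpha x) (alpha y).

Lemma Z1_sqrt t :
  (forall u, mul u u = mul t t -> u = t) ->
  Z1 inv alpha (mul t t) -> Z1 inv alpha t.
Proof.
  intros Huniq Hz; unfold Z1 in *.
  assert (Hroot : inv (alpha t) = t).
  { apply Huniq; rewrite <- invM, <- alphaM, Hz; apply invK. }
  rewrite <- (invK (alpha t)), Hroot; reflexivity.
Qed.

Lemma strongly_two_divisible_Z1 :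
  strongly_two_divisible mul -> strongly_two_divisible_set mul (Z1 inv alpha).
Proof.
  intros Hsqrt z Hz.
  destruct (Hsqrt z) as [t [<- Huniq]].
  exists t; split.
  - split; [| reflexivity].
    apply Z1_sqrt; [intros u Hu; symmetry; exact (Huniq u Hu) | exact Hz].
  - intros u [_ Hu]; apply Huniq, Hu.
Qed.

End Group.

Theorem lemma2p11 (C : Type) (mul : C -> C -> C) (one : C) (inv : C -> C)
  (HG : is_group mul one inv) (alpha : C -> C)
  (Halpha : is_automorphism mul alpha)
  (Halpha2 : forall x, alpha (alpha x) = x) :
  (two_divisible mul (Z1 inv alpha) -> H1_trivial mul inv alpha) /\
  (strongly_two_divisible mul ->
     strongly_two_divisible_set mul (Z1 inv alpha) /\ H1_trivial mul inv alpha).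
Proof.
  destruct Halpha as [alphaM _].
  split; [apply (two_divisible_Z1_H1_trivial HG) |].
  intros Hsqrt.
  assert (HZ1 := strongly_two_divisible_Z1 HG alphaM Hsqrt).
  split; [exact HZ1 |].
  apply (two_divisible_Z1_H1_trivial HG).
  exact (strongly_two_divisible_set_two_divisible HZ1).
Qed.
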